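(* There is a graded Hermitian norm $N=(N_k)_{k\ge1}$ on $R(\mathbb{P}^1,\mathscr{O}(1))$ such that $FS(N_k)^{1/k}$ converges uniformly as $k\to\infty$ to a fixed smooth positive metric on $\mathscr{O}(1)$, but $N$ is not equivalent to $\mathrm{Hilb}(h)$ for any continuous plurisubharmonic metric $h$ on $\mathscr{O}(1)$.
   Context: $R(\mathbb{P}^1,\mathscr{O}(1))=\bigoplus_{k\ge1}H^0(\mathbb{P}^1,\mathscr{O}(k))$; a graded Hermitian norm is a sequence of Hermitian norms $N_k$ on $H^0(\mathbb{P}^1,\mathscr{O}(k))$. $FS(N_k)$ is the metric on $\mathscr{O}(k)$ with $\sum_i|s_i(x)|^2_{FS(N_k)}=1$ for an $N_k$-orthonormal basis $(s_i)$; uniform convergence of metrics means $\sup|\log(h_k/h)|\to0$. A continuous metric $h$ is psh if its curvature current, locally $\frac{i}{2\pi}\partial\bar\partial(-\log|e|^2_h)$, is positive; $\mathrm{Hilb}_k(h)(s)=(\int|s|^2_hc_1(\mathscr{O}(1),h))^{1/2}$ with the Bedford–Taylor measure. Graded norms $N,N'$ are equivalent if $\frac1k\sup_{v\ne0}|\log N_k(v)-\log N'_k(v)|\to0$. *)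

From mathcomp Require Import all_boot all_order all_algebra.
From mathcomp Require Import all_classical all_reals all_analysis.
From mathcomp Require Import complex.
Import Order.TTheory GRing.Theory Num.Theory.
Import numFieldNormedType.Exports.

Set Implicit Arguments.
Unset Strict Implicit.
Unset Printing Implicit Defensive.

Local Open Scope classical_set_scope.
Local Open Scope ring_scope.

(* Conventions:
   - P^1 = C ∪ {∞} with affine chart z = X1/X0 on U0 and w = X0/X1 = 1/z on U1;
     the complex plane C is modelled as R*R, the point (x,y) being x + i y.
   - H^0(P^1,O(k)) = polynomials p in C[z] of degree <= k (P = X0^k p(X1/X0)).
   - A metric h on O(1) is described by its weight phi on U0 :
       |X0|_h^2 = exp(- phi(z)),  so  |P|^2_{h^k}(z) = |p(z)|^2 exp(-k phi(z)),
     and on U1 by  psi1(w) = phi(1/w) + log |w|^2  (weight of the frame X1). *)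

Section Defs.
Variable R : realType.

Notation C := R[i].

Definition cplx (z : R * R) : C := (z.1 +i* z.2)%C.

Definition abs2 (z : C) : R := (complex.Re z) ^+ 2 + (complex.Im z) ^+ 2.

Definition nsq (z : R * R) : R := z.1 ^+ 2 + z.2 ^+ 2.

Definition cinv (w : R * R) : R * R := (w.1 / nsq w, - w.2 / nsq w).

Fixpoint Ck (n : nat) (f : R * R -> R) : Prop :=
  match n with
  | 0 => continuous f
  | n'.+1 => [/\ continuous f, (forall v x, derivable f x v)
                & forall v : R * R, Ck n' ('D_v f)]
  end.

Definition smooth (f : R * R -> R) : Prop := forall n, Ck n f.

Definition Lap (f : R * R -> R) (z : R * R) : R :=
  'D_((1, 0) : R * R) ('D_((1, 0) : R * R) f) z
  + 'D_((0, 1) : R * R) ('D_((0, 1) : R * R) f) z.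

Definition test_fun (chi : R * R -> R) : Prop :=
  smooth chi /\ exists r : R, forall z, r < `|z| -> chi z = 0.

Definition leb2 := (@lebesgue_measure R \x @lebesgue_measure R)%E.

(* the current (i/2pi) ddbar u, locally Delta u/(4 pi) dx dy, is positive:
   its action on every nonnegative test function is nonnegative *)
Definition pos_curvature_current (u : R * R -> R) : Prop :=
  forall chi, test_fun chi -> (forall z, 0 <= chi z) ->
    (0 <= \int[leb2]_(z in setT) (u z * Lap chi z)%:E)%E.

Definition cont_metric_weight (phi : R * R -> R) (psi1 : R * R -> R) : Prop :=
  [/\ continuous phi, continuous psi1 &
      forall w, w != 0 -> psi1 w = phi (cinv w) + ln (nsq w)].

Definition cont_metric (phi : R * R -> R) : Prop :=
  exists psi1, cont_metric_weight phi psi1.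

Definition cont_psh_metric (phi : R * R -> R) : Prop :=
  exists psi1, [/\ cont_metric_weight phi psi1,
                   pos_curvature_current phi & pos_curvature_current psi1].

Definition smooth_pos_metric (phi : R * R -> R) : Prop :=
  exists psi1, [/\ cont_metric_weight phi psi1, smooth phi, smooth psi1,
                   (forall z, 0 < Lap phi z) & (forall w, 0 < Lap psi1 w)].

(* Bedford--Taylor measure c_1(O(1),h) = (i/2pi) ddbar phi, as a measure on the
   chart C (it charges no point, in particular not infinity) *)
Definition is_MA_measure (phi : R * R -> R) (mu : {measure set (R * R) -> \bar R}) :=
  forall chi, test_fun chi -> (forall z, 0 <= chi z) ->
    (\int[mu]_(z in setT) (chi z)%:E
     = ((4 * pi)^-1)%:E * \int[leb2]_(z in setT) (phi z * Lap chi z)%:E)%E.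

Definition H0 (k : nat) : pred {poly C} := fun p => (size p <= k.+1)%N.

Definition herm_norm (k : nat) (N : {poly C} -> R) : Prop :=
  exists B : {poly C} -> {poly C} -> C,
  [/\ (forall a p q r, p \in H0 k -> q \in H0 k -> r \in H0 k ->
          B (a *: p + q) r = a * B p r + B q r),
      (forall p q, p \in H0 k -> q \in H0 k -> B q p = (B p q)^*%C),
      (forall p, p \in H0 k -> p != 0 -> 0 < B p p) &
      (forall p, p \in H0 k -> N p = Num.sqrt (complex.Re (B p p)))].

(* graded Hermitian norm on R(P^1,O(1)) (index 0 is irrelevant) *)
Definition graded_herm_norm (N : nat -> {poly C} -> R) : Prop :=
  forall k, (0 < k)%N -> herm_norm k (N k).

Definition orthonormal_basis (k : nat) (N : {poly C} -> R)
  (s : 'I_k.+1 -> {poly C}) : Prop :=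
  (forall i, s i \in H0 k) /\
  forall a : 'I_k.+1 -> C,
    N (\sum_i a i *: s i) ^+ 2 = \sum_i abs2 (a i).

(* weight of FS(N_k) on the chart U0 computed from an orthonormal basis s:
   sum_i |s_i|^2_{FS} = 1 means exp(-psi) * sum_i |s_i(z)|^2 = 1 *)
Definition FS_weight (k : nat) (s : 'I_k.+1 -> {poly C}) (z : R * R) : R :=
  ln (\sum_i abs2 (s i).[cplx z]).

(* FS(N_k)^{1/k} -> h uniformly: sup |log (FS(N_k)^{1/k} / h)| -> 0 *)
Definition FS_unif_cvg (N : nat -> {poly C} -> R) (phi : R * R -> R) : Prop :=
  forall eps : R, 0 < eps -> exists K : nat, forall k, (K <= k)%N -> (0 < k)%N ->
    forall s : 'I_k.+1 -> {poly C}, orthonormal_basis (N k) s ->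
      forall z, `| FS_weight s z / k%:R - phi z | <= eps.

Definition Hilb (phi : R * R -> R) (mu : {measure set (R * R) -> \bar R})
  (k : nat) (p : {poly C}) : R :=
  Num.sqrt (fine (\int[mu]_(z in setT)
                   (abs2 p.[cplx z] * expR (- (k%:R * phi z)))%:E)%E).

Definition equiv_graded_norms (N N' : nat -> {poly C} -> R) : Prop :=
  forall eps : R, 0 < eps -> exists K : nat, forall k, (K <= k)%N -> (0 < k)%N ->
    forall v, v \in H0 k -> v != 0 ->
      `| ln (N k v) - ln (N' k v) | <= eps * k%:R.

End Defs.

(* Take the diagonal norms N_k with N_k(z^j)^2 = e^{-2k} / C(k, j) for j <> 1 but
   N_k(z)^2 = e^{2k}.  Their Bergman kernel sum_j |z|^{2j} / N_k(z^j)^2 equals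
   e^{2k} ((1 + |z|^2)^k - k |z|^2) + e^{-2k} |z|^2, which lies between one half and
   all of e^{2k} (1 + |z|^2)^k; hence FS(N_k)^{1/k} converges uniformly, at rate
   O(1/k), to the Fubini-Study metric of weight 2 + log (1 + |z|^2).  On the other
   hand, for any weight phi and any measure mu the moments
   m_j = int |z|^{2j} e^{-k phi} dmu satisfy 2 m_1 <= m_0 + m_2, since
   2 t <= 1 + t^2.  As N_k(1) and N_k(z^2) are at most e^{-k} while N_k(z) = e^k,
   Hilb_k(phi) cannot be within a factor e^{k/4} of N_k on 1, z and z^2. *)

From mathcomp Require Import all_boot all_order all_algebra.
From mathcomp Require Import all_classical all_reals all_analysis.
From mathcomp Require Import complex measurable_realfun.
From mathcomp Require Import ring lra zify.
Import Order.TTheory GRing.Theory Num.Theory.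
Import numFieldNormedType.Exports.
Local Open Scope classical_set_scope.
Local Open Scope ring_scope.

Section Abs2.
Context {R : realType}.
Notation C := R[i].
Implicit Types a b c : C.

Lemma abs2_ge0 c : 0 <= abs2 c.
Proof. by rewrite /abs2 addr_ge0 ?sqr_ge0. Qed.

Lemma abs2_eq0 c : (abs2 c == 0) = (c == 0).
Proof.
case: c => x y; rewrite /abs2 /= paddr_eq0 ?sqr_ge0 // !sqrf_eq0.
by rewrite eq_complex.
Qed.

Lemma abs2_gt0 c : c != 0 -> 0 < abs2 c.
Proof. by move=> c0; rewrite lt_def abs2_eq0 c0 abs2_ge0. Qed.

Lemma abs2M a b : abs2 (a * b) = abs2 a * abs2 b.
Proof. by case: a => a1 a2; case: b => b1 b2; rewrite /abs2 /=; ring. Qed.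

Lemma abs2X c n : abs2 (c ^+ n) = abs2 c ^+ n.
Proof.
elim: n => [|n IHn]; first by rewrite /abs2 /=; ring.
by rewrite !exprS abs2M IHn.
Qed.

Lemma abs2J c : abs2 c^*%C = abs2 c.
Proof. by case: c => x y; rewrite /abs2 /=; ring. Qed.

Lemma abs2_real (r : R) : abs2 (r%:C)%C = r ^+ 2.
Proof. by rewrite /abs2 /=; ring. Qed.

Lemma Re_conjM c : complex.Re (c^*%C * c) = abs2 c.
Proof. by case: c => x y; rewrite /abs2 /=; ring. Qed.

Lemma Re_sum I (r : seq I) (P : pred I) (F : I -> C) :
  complex.Re (\sum_(i <- r | P i) F i) = \sum_(i <- r | P i) complex.Re (F i).
Proof. by apply: big_morph => // -[? ?] [? ?]. Qed.

Lemma Re_mul_le a b (l : R) : 0 < l ->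
  complex.Re (a * b) <= (l * abs2 a + abs2 b / l) / 2.
Proof.
case: a b => a1 a2 [b1 b2] l0; rewrite /abs2 /= -subr_ge0.
have -> : (l * (a1 ^+ 2 + a2 ^+ 2) + (b1 ^+ 2 + b2 ^+ 2) / l) / 2 - (a1 * b1 - a2 * b2)
    = ((l * a1 - b1) ^+ 2 + (l * a2 + b2) ^+ 2) / (2 * l).
  by field; rewrite gt_eqF.
by rewrite divr_ge0 ?addr_ge0 ?sqr_ge0 // mulr_ge0 // ltW.
Qed.


Lemma nsq_ge0 (z : R * R) : 0 <= nsq z.
Proof. by rewrite addr_ge0 ?sqr_ge0. Qed.

Lemma nsq_gt0 (w : R * R) : w != 0 -> 0 < nsq w.
Proof.
case: w => w1 w2 w0; rewrite lt_def nsq_ge0 andbT; apply: contra w0.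
by rewrite /nsq /= paddr_eq0 ?sqr_ge0 // !sqrf_eq0 => /andP[/eqP -> /eqP ->].
Qed.

End Abs2.

Lemma H0_coef_eq0 {R : realType} {k} {p : {poly R[i]}} {j} :
  p \in H0 k -> (k < j)%N -> p`_j = 0.
Proof. by rewrite unfold_in => pk kj; apply: nth_default; apply: leq_trans pk kj. Qed.

Lemma orthonormal_basis_span {R : realType} {k} {N : {poly R[i]} -> R}
    {s : 'I_k.+1 -> {poly R[i]}} :
  N 0 = 0 -> orthonormal_basis N s ->
  forall q, q \in H0 k -> exists a : 'I_k.+1 -> R[i], q = \sum_i a i *: s i.
Proof.
move=> N0 [sH sN] q qH.
pose M : 'M[R[i]]_k.+1 := \matrix_(i, j) (s i)`_j.
have coef_comb (a : 'I_k.+1 -> R[i]) j :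
    (\sum_i a i *: s i)`_j = if (j < k.+1)%N then ((\row_i a i) *m M) 0 (inord j) else 0.
  rewrite coef_sum; case: ltnP => jk; last first.
    by rewrite big1 // => i _; rewrite coefZ (H0_coef_eq0 (sH i)) ?mulr0.
  by rewrite !mxE; apply: eq_bigr => i _; rewrite coefZ !mxE inordK.
have M_unit : M \in unitmx.
  rewrite -row_free_unit; apply/inj_row_free => v vM0.
  have comb0 : \sum_i v 0 i *: s i = 0.
    apply/polyP => j; rewrite coef_comb coef0.
    have -> : \row_i v 0 i = v by apply/rowP => i; rewrite mxE.
    by rewrite vM0 mxE if_same.
  have /eqP := sN (v 0); rewrite comb0 N0 expr0n /= eq_sym psumr_eq0; last first.
    by move=> i _; apply: abs2_ge0.
  move=> /allP v0; apply/rowP => i; rewrite mxE; apply/eqP.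
  by rewrite -abs2_eq0; apply: v0 (mem_index_enum i).
exists (fun i => ((\row_(j < k.+1) q`_j) *m invmx M) 0 i).
apply/polyP => j; rewrite coef_comb; case: ltnP => jk; last exact: H0_coef_eq0 qH jk.
have -> : \row_i ((\row_(j < k.+1) q`_j) *m invmx M) 0 i = (\row_(j < k.+1) q`_j) *m invmx M.
  by apply/rowP => i; rewrite mxE.
by rewrite mulmxKV // mxE inordK.
Qed.

Section DiagonalNorm.
Context {R : realType}.
Variables (k : nat) (w : nat -> R).
Hypothesis w_gt0 : forall j, (j <= k)%N -> 0 < w j.
Notation C := R[i].

Definition diag_norm (p : {poly C}) : R :=
  Num.sqrt (\sum_(j < k.+1) w j * abs2 p`_j).

Definition diag_form (p q : {poly C}) : C :=
  \sum_(j < k.+1) (w j)%:C%C * p`_j * (q`_j)^*%C.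

Definition diag_kernel (c : C) : R := \sum_(j < k.+1) abs2 (c ^+ j) / w j.

Let w_ord_gt0 (j : 'I_k.+1) : 0 < w j. Proof. by apply: w_gt0; rewrite -ltnS. Qed.

Lemma diag_norm_sqr p : diag_norm p ^+ 2 = \sum_(j < k.+1) w j * abs2 p`_j.
Proof. by rewrite sqr_sqrtr // sumr_ge0 // => j _; rewrite mulr_ge0 ?abs2_ge0 ?ltW. Qed.

Lemma diag_norm0 : diag_norm 0 = 0.
Proof.
by rewrite /diag_norm big1 ?sqrtr0 // => j _; rewrite coef0 /abs2 /= expr0n addr0 mulr0.
Qed.

Lemma diag_norm_monomial m : (m <= k)%N -> diag_norm 'X^m = Num.sqrt (w m).
Proof.
move=> mk; rewrite /diag_norm (bigD1 (Ordinal (mk : (m < k.+1)%N))) //= coefXn eqxx.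
rewrite big1 ?addr0 => [|j /negbTE j_neq_m]; first by congr Num.sqrt; rewrite /abs2 /=; ring.
by rewrite coefXn -val_eqE /= in j_neq_m *; rewrite j_neq_m /abs2 /= expr0n addr0 mulr0.
Qed.

Lemma diag_formE p : diag_form p p = (\sum_(j < k.+1) w j * abs2 p`_j)%:C%C.
Proof.
rewrite rmorph_sum; apply: eq_bigr => j _.
by case: (p`_j) => a b; apply/eqP; rewrite eq_complex /abs2 /=; apply/andP; split; apply/eqP; ring.
Qed.

Lemma herm_norm_diag : herm_norm k diag_norm.
Proof.
exists diag_form; split.
- move=> a p q r _ _ _; rewrite /diag_form mulr_sumr -big_split /=.
  by apply: eq_bigr => j _; rewrite coefD coefZ; ring.
- move=> p q _ _; rewrite /diag_form rmorph_sum; apply: eq_bigr => j _.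
  by rewrite !rmorphM /= conjcK oppr0 complexr0; ring.
- move=> p pk p0; rewrite diag_formE ltcR.
  have top : ((size p).-1 < k.+1)%N by move: pk; rewrite unfold_in; lia.
  rewrite (bigD1 (Ordinal top)) //= ltr_pwDl ?mulr_gt0 ?w_gt0 ?abs2_gt0 //.
  + by rewrite -lead_coefE lead_coef_eq0.
  + by rewrite sumr_ge0 // => j _; rewrite mulr_ge0 ?abs2_ge0 ?ltW.
- by move=> p _; rewrite /diag_norm diag_formE.
Qed.

Lemma Re_horner_le p c : p \in H0 k ->
  complex.Re p.[c] <= (diag_norm p ^+ 2 + diag_kernel c) / 2.
Proof.
move=> pk; rewrite unfold_in in pk.
rewrite (horner_coef_wide _ pk) Re_sum diag_norm_sqr -big_split /= mulr_suml.
by apply: ler_sum => j _; rewrite mulrDl -mulrDl; apply: Re_mul_le.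
Qed.

Lemma sum_abs2_orthonormal_basis (c : C) (s : 'I_k.+1 -> {poly C}) :
  orthonormal_basis diag_norm s -> \sum_i abs2 (s i).[c] = diag_kernel c.
Proof.
move=> ONB; have [sH sN] := ONB.
have Re_comb_le a : complex.Re (\sum_i a i *: s i).[c]
    <= (\sum_i abs2 (a i) + \sum_i abs2 (s i).[c]) / 2.
  rewrite horner_sum Re_sum -big_split /= mulr_suml; apply: ler_sum => i _.
  by rewrite hornerZ; have := Re_mul_le (a i) (s i).[c] 1 ltr01; rewrite mul1r divr1.
(* Both inequalities are Cauchy-Schwarz, tested on sum_i conj(s_i(c)) s_i and on the
   peak section with coefficients conj(c^j) / w_j. *)
apply/eqP; rewrite eq_le; apply/andP; split.
- pose p := \sum_i (s i).[c]^*%C *: s i.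
  have pH : p \in H0 k.
    rewrite unfold_in; apply/leq_sizeP => j kj; rewrite coef_sum big1 // => i _.
    by rewrite coefZ (H0_coef_eq0 (sH i)) ?mulr0.
  have := @Re_horner_le p c pH; rewrite sN.
  rewrite /p horner_sum Re_sum.
  under eq_bigr do rewrite hornerZ Re_conjM.
  under [X in _ <= (X + _) / 2]eq_bigr do rewrite abs2J.
  lra.
- pose q := \poly_(j < k.+1) ((c ^+ j)^*%C * (w j)^-1%:C%C).
  have qH : q \in H0 k by rewrite unfold_in size_poly.
  have [a qE] := orthonormal_basis_span diag_norm0 ONB _ qH.
  have Req : complex.Re q.[c] = diag_kernel c.
    rewrite (horner_coef_wide _ (size_poly _ _)) Re_sum; apply: eq_bigr => j _.
    rewrite coef_poly ltn_ord.
    by case: (c ^+ j) => x y; rewrite /abs2 /=; field; rewrite gt_eqF.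
  have Nq : \sum_i abs2 (a i) = diag_kernel c.
    rewrite -sN -qE diag_norm_sqr; apply: eq_bigr => j _.
    rewrite coef_poly ltn_ord abs2M abs2J abs2_real.
    by have := w_ord_gt0 j; move: (w j) => x x0; field; rewrite gt_eqF.
  have := Re_comb_le a; rewrite -qE Req Nq; lra.
Qed.

End DiagonalNorm.

Section TwistedNorm.
Context {R : realType}.

Definition twisted_weight (k j : nat) : R :=
  if j == 1%N then expR (2 * k%:R) else expR (- (2 * k%:R)) / 'C(k, j)%:R.

Definition twisted_norm (k : nat) : {poly R[i]} -> R := diag_norm k (twisted_weight k).

Lemma twisted_weight_gt0 k j : (j <= k)%N -> 0 < twisted_weight k j.
Proof.
by move=> jk; rewrite /twisted_weight; case: ifP; rewrite ?divr_gt0 ?expR_gt0 ?ltr0n ?bin_gt0.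
Qed.

Lemma twisted_kernel_sum k (x : R) : (0 < k)%N ->
  \sum_(j < k.+1) x ^+ j / twisted_weight k j
    = expR (2 * k%:R) * ((1 + x) ^+ k - k%:R * x) + x / expR (2 * k%:R).
Proof.
move=> k0; have k1 : (1 < k.+1)%N by [].
pose j1 := Ordinal k1.
have binom : (1 + x) ^+ k = k%:R * x + \sum_(j < k.+1 | j != j1) 'C(k, j)%:R * x ^+ j.
  rewrite exprDn (bigD1 j1) //= bin1 expr1n mul1r mulr_natl; congr (_ + _).
  by apply: eq_bigr => j _; rewrite expr1n mul1r mulr_natl.
rewrite binom [k%:R * x + _]addrC addrK mulr_sumr (bigD1 j1) //= addrC; congr (_ + _).
apply: eq_bigr => j /negbTE j_neq1; rewrite /twisted_weight -val_eqE /= in j_neq1 *.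
by rewrite j_neq1 expRN invf_div invrK; ring.
Qed.

Lemma binomial_ge_three_terms n (x : R) : 0 <= x ->
  1 + n%:R * x + 'C(n, 2)%:R * x ^+ 2 <= (1 + x) ^+ n.
Proof.
move=> x0; elim: n => [|n IHn]; first by rewrite bin0n !mul0r !addr0 expr0.
rewrite [(1 + x) ^+ _]exprSr binS bin1 natrD -addn1 natrD.
apply: le_trans (ler_wpM2r _ IHn); last by rewrite addr_ge0.
have : 0 <= 'C(n, 2)%:R * x ^+ 3 by rewrite mulr_ge0 ?exprn_ge0.
rewrite !exprS expr0 mulr1; nra.
Qed.

Lemma linear_le_binomial k (x : R) : (2 <= k)%N -> 0 <= x ->
  2 * (k%:R * x) <= (1 + x) ^+ k.
Proof.
move=> k2 x0; apply: le_trans (binomial_ge_three_terms k _ x0).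
have binE : 2 * 'C(k, 2)%:R = k%:R * (k%:R - 1) :> R.
  by rewrite -[2]/(2%:R) -natrM -mul_bin_diag bin1 natrM -subn1 natrB // ltnW.
have kk : (k%:R : R) ^+ 2 <= 4 * 'C(k, 2)%:R.
  have k2R : (2 : R) <= k%:R by rewrite (ler_nat R 2).
  have -> : 4 * 'C(k, 2)%:R = 2 * (k%:R * (k%:R - 1)) :> R by rewrite -binE; ring.
  nra.
have := sqr_ge0 (k%:R * x / 2 - 1); have := ler_wpM2r (sqr_ge0 x) kk.
have := ler0n R 'C(k, 2); nra.
Qed.

Lemma twisted_kernel_bounds k (x : R) : (2 <= k)%N -> 0 <= x ->
  let M := expR (2 * k%:R) * (1 + x) ^+ k in
  M / 2 <= \sum_(j < k.+1) x ^+ j / twisted_weight k j <= M.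
Proof.
move=> k2 x0 /=; rewrite twisted_kernel_sum; last exact: leq_trans k2.
set E := expR (2 * k%:R).
have E1 : 1 <= E by rewrite -expR0 ler_expR mulr_ge0 ?ler0n.
have E0 : 0 < E by apply: lt_le_trans E1.
have xE : 0 <= x / E <= x.
  by rewrite divr_ge0 ?(ltW E0) //= ler_pdivrMr // ler_peMr.
have k1 : (1 : R) <= k%:R by rewrite (ler_nat R 1); apply: leq_trans k2.
have lo := ler_wpM2l (ltW E0) (linear_le_binomial _ _ k2 x0).
have hi : x <= E * (k%:R * x).
  by rewrite mulrA ler_peMl //; nra.
apply/andP; split; lra.
Qed.

Lemma ln_close_half (a b : R) : 0 < a -> a / 2 <= b <= a -> `|ln b - ln a| <= 1.
Proof.
move=> a0 /andP[lo hi]; have b0 : 0 < b by apply: lt_le_trans lo; rewrite divr_gt0.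
have ln2 : ln (2 : R) <= 1 by have := @le_ln1Dx R 1; rewrite -[1 + 1]/2; apply; lra.
have lnlo : ln (a / 2) <= ln b by rewrite ler_ln ?posrE ?divr_gt0.
have lnhi : ln b <= ln a by rewrite ler_ln ?posrE.
rewrite ln_div ?posrE // in lnlo; rewrite ler_norml; apply/andP; split; lra.
Qed.

End TwistedNorm.

Section FubiniStudyLimit.
Context {R : realType}.

Definition fs_potential (z : R * R) : R := 2 + ln (1 + nsq z).

Lemma FS_weight_twisted k (s : 'I_k.+1 -> {poly R[i]}) z :
  orthonormal_basis (twisted_norm k) s ->
  FS_weight s z = ln (\sum_(j < k.+1) nsq z ^+ j / twisted_weight k j).
Proof.
move=> ONB; rewrite /FS_weight (sum_abs2_orthonormal_basis _ _ (twisted_weight_gt0 k) _ _ ONB).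
by congr ln; apply: eq_bigr => j _; rewrite abs2X.
Qed.

Lemma twisted_FS_cvg : FS_unif_cvg twisted_norm fs_potential.
Proof.
move=> eps eps0.
have [n eps_n] : exists n : nat, eps^-1 < n%:R.
  by exists (Num.Def.archi_bound eps^-1); apply: archi_boundP; rewrite invr_ge0 ltW.
exists (maxn n 2) => k /[!geq_max] /andP[nk k2] _ s ONB z.
rewrite FS_weight_twisted //.
have [M_half_le le_M] := andP (twisted_kernel_bounds _ _ k2 (nsq_ge0 z)).
set x := nsq z in M_half_le le_M *; set K := \sum_(j < k.+1) _ in M_half_le le_M *.
set M := expR (2 * k%:R) * (1 + x) ^+ k in M_half_le le_M.
have x0 : 0 <= x by apply: nsq_ge0.
have kR : (0 : R) < k%:R by rewrite ltr0n; apply: leq_trans k2.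
have M0 : 0 < M by rewrite mulr_gt0 ?expR_gt0 ?exprn_gt0 ?ltr_pwDl.
have ln_M : ln M = k%:R * fs_potential z.
  rewrite lnM ?posrE ?expR_gt0 ?exprn_gt0 ?ltr_pwDl // expRK lnXn ?ltr_pwDl //.
  by rewrite -mulr_natr /fs_potential -/x; ring.
have := ln_close_half _ _ M0 (introT andP (conj M_half_le le_M)); rewrite ln_M.
have -> : ln K / k%:R - fs_potential z = (ln K - k%:R * fs_potential z) / k%:R.
  by field; rewrite gt_eqF.
rewrite normrM [`|_^-1|]ger0_norm ?invr_ge0 ?(ltW kR) // => close.
rewrite ler_pdivrMr //; apply: le_trans close _.
rewrite -[X in X <= _](@mulfV _ eps) ?gt_eqF // ler_pM2l //.
by apply: le_trans (ltW eps_n) _; rewrite ler_nat.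
Qed.

End FubiniStudyLimit.

Section FubiniStudySmooth.
Context {R : realType}.
Implicit Types (x v : R * R) (f : R * R -> R).

Lemma derive_along_line f x v :
  'D_v f x = 'D_1 (fun h : R => f (h *: v + x)) 0.
Proof.
rewrite /derive; do 2 f_equal; apply: funext => h /=.
by rewrite addr0 scale0r add0r [_%:A]mulr1.
Qed.

Lemma is_derive_along_line f x v (df : R) :
  is_derive x v f df <-> is_derive (0 : R) 1 (fun h : R => f (h *: v + x)) df.
Proof.
split=> -[d <-].
- by apply: DeriveDef; [exact: (derivable1P f x v).1 | rewrite derive_along_line].
- by apply: DeriveDef; [exact: (derivable1P f x v).2 | rewrite derive_along_line].
Qed.

Lemma is_derive_fst x v : is_derive x v fst v.1.
Proof.
apply/is_derive_along_line.
have -> : (fun h : R => (h *: v + x).1) = (fun h => h * v.1 + x.1) by [].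
by apply: is_derive_eq; rewrite /GRing.scale /=; ring.
Qed.

Lemma is_derive_snd x v : is_derive x v snd v.2.
Proof.
apply/is_derive_along_line.
have -> : (fun h : R => (h *: v + x).2) = (fun h => h * v.2 + x.2) by [].
by apply: is_derive_eq; rewrite /GRing.scale /=; ring.
Qed.

Definition fs_quad x : R := 1 + nsq x.

Lemma fs_quad_gt0 x : 0 < fs_quad x.
Proof. by rewrite ltr_pwDl ?nsq_ge0. Qed.

Lemma continuous_fs_quad : continuous fs_quad.
Proof.
have cfst : continuous (fun z : R * R => z.1) by move=> z; exact: cvg_fst.
have csnd : continuous (fun z : R * R => z.2) by move=> z; exact: cvg_snd.
move=> z; apply: continuousD; first exact: cst_continuous.
by apply: continuousD; apply: continuousM; (exact: cfst || exact: csnd).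
Qed.

(* Expressions in x, y, 1 / (1 + x^2 + y^2) and log (1 + x^2 + y^2): this class is
   closed under directional derivatives, which gives smoothness by induction. *)
Inductive quad_term : Type :=
  | QX | QY | QConst of R | QInv | QLog
  | QAdd of quad_term & quad_term | QMul of quad_term & quad_term.

Fixpoint quad_eval (t : quad_term) x : R :=
  match t with
  | QX => x.1 | QY => x.2 | QConst r => r
  | QInv => (fs_quad x)^-1 | QLog => ln (fs_quad x)
  | QAdd t1 t2 => quad_eval t1 x + quad_eval t2 x
  | QMul t1 t2 => quad_eval t1 x * quad_eval t2 x
  end.

Definition fs_quad_deriv v : quad_term :=
  QAdd (QMul (QConst (2 * v.1)) QX) (QMul (QConst (2 * v.2)) QY).

Fixpoint quad_deriv v (t : quad_term) : quad_term :=
  match t with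
  | QX => QConst v.1 | QY => QConst v.2 | QConst _ => QConst 0
  | QInv => QMul (QConst (-1)) (QMul (QMul QInv QInv) (fs_quad_deriv v))
  | QLog => QMul QInv (fs_quad_deriv v)
  | QAdd t1 t2 => QAdd (quad_deriv v t1) (quad_deriv v t2)
  | QMul t1 t2 => QAdd (QMul (quad_deriv v t1) t2) (QMul t1 (quad_deriv v t2))
  end.

Lemma is_derive_fs_quad x v : is_derive x v fs_quad (quad_eval (fs_quad_deriv v) x).
Proof.
have := is_deriveD (is_derive_cst (1 : R) x v)
  (is_deriveD (is_deriveX 2 (is_derive_fst x v)) (is_deriveX 2 (is_derive_snd x v))).
by move/is_derive_eq; apply; rewrite /GRing.scale /=; ring.
Qed.

Lemma is_derive_quad_eval t x v :
  is_derive x v (quad_eval t) (quad_eval (quad_deriv v t) x).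
Proof.
have q_line := (is_derive_along_line _ _ _ _).1 (is_derive_fs_quad x v).
have q0 : fs_quad (0 *: v + x) != 0 by rewrite gt_eqF ?fs_quad_gt0.
elim: t => [| |r| | |t1 IH1 t2 IH2|t1 IH1 t2 IH2] /=.
- exact: is_derive_fst.
- exact: is_derive_snd.
- exact: is_derive_cst.
- apply/is_derive_along_line.
  apply: is_derive_eq (@is_deriveV _ (fun h : R => fs_quad (h *: v + x)) 0 _ 1 q0 q_line) _.
  rewrite scale0r add0r /= /GRing.scale /=.
  by field; rewrite gt_eqF ?fs_quad_gt0.
- apply/is_derive_along_line.
  apply: is_derive_eq (@is_derive1_comp _ (@ln R) (fun h : R => fs_quad (h *: v + x)) 0 _ _
    (is_derive1_ln (fs_quad_gt0 (0 *: v + x))) q_line) _.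
  by rewrite scale0r add0r.
- exact: is_deriveD.
- by apply: is_derive_eq (is_deriveM IH1 IH2) _; rewrite /GRing.scale /=; ring.
Qed.

Lemma continuous_quad_eval t : continuous (quad_eval t).
Proof.
elim: t => [| |r| | |t1 IH1 t2 IH2|t1 IH1 t2 IH2] /= z.
- exact: cvg_fst.
- exact: cvg_snd.
- exact: cst_continuous.
- by apply: continuousV; rewrite ?gt_eqF ?fs_quad_gt0 //; apply: continuous_fs_quad.
- apply: continuous_comp; first exact: continuous_fs_quad.
  exact/continuous_ln/fs_quad_gt0.
- exact: continuousD (IH1 z) (IH2 z).
- exact: continuousM (IH1 z) (IH2 z).
Qed.

Lemma derive_quad_eval v t x : 'D_v (quad_eval t) x = quad_eval (quad_deriv v t) x.
Proof. by case: (is_derive_quad_eval t x v). Qed.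

Lemma smooth_quad_eval t : smooth (quad_eval t).
Proof.
move=> n; elim: n t => [|n IHn] t /=; first exact: continuous_quad_eval.
split; [exact: continuous_quad_eval | by move=> v x; case: (is_derive_quad_eval t x v) |].
by move=> v; rewrite (funext (derive_quad_eval v t)).
Qed.

End FubiniStudySmooth.

Section FubiniStudyMetric.
Context {R : realType}.

Lemma fs_potential_quad : fs_potential = quad_eval (QAdd (QConst 2) QLog) :> (R * R -> R).
Proof. by []. Qed.

Lemma Lap_fs_potential (z : R * R) : Lap fs_potential z = 4 / fs_quad z ^+ 2.
Proof.
rewrite /Lap fs_potential_quad !(funext (derive_quad_eval _ _)) !derive_quad_eval.
have q0 := fs_quad_gt0 z.
by rewrite /= /fs_quad /nsq in q0 *; field; rewrite gt_eqF.
Qed.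

Lemma fs_potential_cinv (w : R * R) : w != 0 ->
  fs_potential w = fs_potential (cinv w) + ln (nsq w).
Proof.
move=> /nsq_gt0 w0.
have nsq_cinv : nsq (cinv w) = (nsq w)^-1.
  by move: w0; rewrite /cinv /nsq /= => w0; field; rewrite gt_eqF.
have inv_pos : 0 < 1 + (nsq w)^-1 by rewrite ltr_pwDl // invr_ge0 ltW.
rewrite /fs_potential nsq_cinv -[RHS]addrA -lnM ?posrE //.
by rewrite mulrDl mul1r mulVf ?gt_eqF // [nsq w + 1]addrC.
Qed.

Lemma smooth_pos_metric_fs : smooth_pos_metric (@fs_potential R).
Proof.
have Lap_gt0 (z : R * R) : 0 < Lap fs_potential z.
  by rewrite Lap_fs_potential divr_gt0 ?exprn_gt0 ?fs_quad_gt0.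
have smooth_fs : smooth (@fs_potential R) by rewrite fs_potential_quad; apply: smooth_quad_eval.
exists fs_potential; split => //; split; try exact: fs_potential_cinv;
  by rewrite fs_potential_quad; apply: continuous_quad_eval.
Qed.

End FubiniStudyMetric.

Section HilbertMoments.
Context {R : realType}.

Lemma open_measurable_prod (A : set (R * R)) : open A -> measurable A.
Proof.
move=> oA.
pose box (q : (rat * rat) * rat) : set (R * R) :=
  `](ratr q.1.1 - ratr q.2), (ratr q.1.1 + ratr q.2)[%classic
  `*` `](ratr q.1.2 - ratr q.2), (ratr q.1.2 + ratr q.2)[%classic.
have -> : A = \bigcup_q (if pselect (box q `<=` A) then box q else set0).
  apply/seteqP; split => [z Az|z [q _]]; last by case: pselect => // /[apply].
  have /nbhs_ballP[r r0 zrA] : nbhs z A by apply: oA.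
  have /rat_in_itvoo[q3] : (0 : R) < r / 2 by rewrite divr_gt0.
  rewrite in_itv /= => /andP[q3_gt0 q3_lt].
  have /rat_in_itvoo[q1] : z.1 - ratr q3 < z.1 + ratr q3 by lra.
  rewrite in_itv /= => /andP[q1_lo q1_hi].
  have /rat_in_itvoo[q2] : z.2 - ratr q3 < z.2 + ratr q3 by lra.
  rewrite in_itv /= => /andP[q2_lo q2_hi].
  have zB : box ((q1, q2), q3) z by split; rewrite /= in_itv /=; apply/andP; split; lra.
  exists ((q1, q2), q3) => //; case: pselect => // -[].
  move=> [w1 w2] [] /=; rewrite !in_itv /= => /andP[? ?] /andP[? ?].
  by apply: zrA; split; rewrite /ball /= ltr_norml; apply/andP; split; lra.
apply: countable_bigcupT_measurable => // q; case: pselect => [?|?]; last exact: measurable0.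
by apply: measurableX; apply: measurable_itv.
Qed.

Lemma continuous_measurable_fun_prod (f : R * R -> R) :
  continuous f -> measurable_fun setT f.
Proof.
move=> /continuousP cf; apply: (measurability _ (RGenOpens.measurableE R)).
move=> _ [_ [a [b ->] <-]]; rewrite setTI; apply: open_measurable_prod.
by apply: cf; apply: interval_open.
Qed.

Lemma integral_moments_AMGM d (T : measurableType d) (mu : {measure set T -> \bar R})
    (t g : T -> R) :
  measurable_fun setT t -> measurable_fun setT g ->
  (forall x, 0 <= t x) -> (forall x, 0 <= g x) ->
  (\int[mu]_(x in setT) (t x * g x)%:E + \int[mu]_(x in setT) (t x * g x)%:E
   <= \int[mu]_(x in setT) (g x)%:E + \int[mu]_(x in setT) (t x ^+ 2 * g x)%:E)%E.
Proof.
move=> mt mg t0 g0.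
have mtg : measurable_fun setT (fun x => t x * g x) by apply: measurable_funM.
have mt2g : measurable_fun setT (fun x => t x ^+ 2 * g x).
  by apply: measurable_funM => //; apply: measurable_funX.
have tg0 x : 0 <= t x * g x by rewrite mulr_ge0.
have t2g0 x : 0 <= t x ^+ 2 * g x by rewrite mulr_ge0 ?sqr_ge0.
rewrite -!ge0_integralD //; try by move=> x _; rewrite lee_fin.
- apply: ge0_le_integral => //; try by move=> x _; rewrite lee_fin addr_ge0.
  + by apply: emeasurable_funD; apply/measurable_EFinP.
  + by apply: emeasurable_funD; apply/measurable_EFinP.
  + move=> x _; rewrite lee_fin -subr_ge0.
    have -> : g x + t x ^+ 2 * g x - (t x * g x + t x * g x) = (1 - t x) ^+ 2 * g x by ring.
    by rewrite mulr_ge0 ?sqr_ge0.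
- exact/measurable_EFinP.
- exact/measurable_EFinP.
- exact/measurable_EFinP.
- exact/measurable_EFinP.
Qed.

Lemma sqrt_fineK (x : \bar R) : 0 < Num.sqrt (fine x) -> x = (Num.sqrt (fine x) ^+ 2)%:E.
Proof.
case: x => [r| |] /=; rewrite ?sqrtr0 ?ltxx // sqrtr_gt0 => r0.
by rewrite sqr_sqrtr // ltW.
Qed.

Lemma Hilb_monomial (phi : R * R -> R) mu k n :
  Hilb phi mu k 'X^n
  = Num.sqrt (fine (\int[mu]_(z in setT) (nsq z ^+ n * expR (- (k%:R * phi z)))%:E)%E).
Proof.
by rewrite /Hilb; congr (Num.sqrt (fine _)); apply: eq_integral => z _; rewrite hornerXn abs2X.
Qed.

Lemma Hilb_log_convex (phi : R * R -> R) mu k : measurable_fun setT phi ->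
  let H n := Hilb phi mu k 'X^n in
  0 < H 0%N -> 0 < H 1%N -> 0 < H 2%N -> 2 * H 1%N ^+ 2 <= H 0%N ^+ 2 + H 2%N ^+ 2.
Proof.
(* Positivity rules out infinite moments, on which [fine] would return 0. *)
move=> mphi H; rewrite /H !Hilb_monomial => /sqrt_fineK E0 /sqrt_fineK E1 /sqrt_fineK E2.
have mg : measurable_fun setT (fun z => expR (- (k%:R * phi z))).
  apply: measurableT_comp; first exact: measurable_expR.
  by apply: measurable_funN; apply: measurable_funM.
have mnsq : measurable_fun setT (@nsq R).
  by apply: measurable_funD; apply: measurable_funX; [exact: measurable_fst | exact: measurable_snd].
rewrite -lee_fin mulr_natl mulr2n !EFinD -E0 -E1 -E2.
under [X in (_ <= X + _)%E]eq_integral do rewrite expr0 mul1r.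
exact: (@integral_moments_AMGM _ _ mu _ _ mnsq mg (@nsq_ge0 R) (fun z => expR_ge0 _)).
Qed.

End HilbertMoments.

Section TwistedNotHilbert.
Context {R : realType}.

Lemma sqrt_expR2 (x : R) : Num.sqrt (expR (2 * x)) = expR x.
Proof. by rewrite -[2]/(2%:R) expRM_natl sqrtr_sqr gtr0_norm ?expR_gt0. Qed.

Lemma ln_twisted_norm_1 k : ln (twisted_norm k 'X^0) = - k%:R :> R.
Proof.
rewrite /twisted_norm diag_norm_monomial //.
by rewrite /twisted_weight /= bin0 divr1 -mulrN sqrt_expR2 expRK.
Qed.

Lemma ln_twisted_norm_X k : (0 < k)%N -> ln (twisted_norm k 'X^1) = k%:R :> R.
Proof. by move=> k0; rewrite /twisted_norm diag_norm_monomial // /twisted_weight /= sqrt_expR2 expRK. Qed.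

Lemma ln_twisted_norm_X2 k : (2 <= k)%N -> ln (twisted_norm k 'X^2) <= - k%:R :> R.
Proof.
move=> k2; have w2 : twisted_weight k 2 <= expR (2 * - k%:R) :> R.
  rewrite /twisted_weight /= mulrN ler_pdivrMr ?ltr0n ?bin_gt0 //.
  by rewrite ler_peMr ?expR_ge0 // ler1n bin_gt0.
rewrite /twisted_norm diag_norm_monomial // -[X in _ <= X](expRK (- k%:R)).
rewrite ler_ln ?posrE ?expR_gt0 ?sqrtr_gt0 ?twisted_weight_gt0 //.
by rewrite -sqrt_expR2 ler_sqrt // expR_ge0.
Qed.

Lemma ln_close_below (a b c : R) : 0 <= b -> ln a <= - c -> `|ln a - ln b| < c -> 0 < b < 1.
Proof.
move=> b0 lna; rewrite ltr_norml => /andP[lo hi].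
have b_gt0 : 0 < b.
  rewrite lt_def b0 andbT; apply/negP => /eqP b_eq0.
  (* [ln 0 = 0], so [b = 0] would give [`|ln a| < c]. *)
  by move: lo; rewrite b_eq0 (ln0 (lexx 0)) subr0; lra.
by rewrite b_gt0 /= ltNge; apply/negP => /ln_ge0; lra.
Qed.

Lemma ln_close_above (a b c : R) : c <= ln a -> `|ln a - ln b| < c -> 1 < b.
Proof.
move=> lna; rewrite ltr_norml => /andP[lo hi].
by rewrite ltNge; apply/negP => /ln_le0; lra.
Qed.

Lemma twisted_not_equiv_Hilb (phi : R * R -> R) mu : measurable_fun setT phi ->
  ~ equiv_graded_norms twisted_norm (Hilb phi mu).
Proof.
move=> mphi /(_ (1 / 4)) [|K equivK]; first lra.
pose k := maxn K 2; have k2 : (2 <= k)%N by apply: leq_maxr.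
have k_gt0 : (0 < k)%N by apply: leq_trans k2.
have kR : (0 : R) < k%:R by rewrite ltr0n.
have close n : (n <= 2)%N ->
    `|ln (twisted_norm k 'X^n) - ln (Hilb phi mu k 'X^n)| < k%:R.
  move=> n2; apply: le_lt_trans (equivK k (leq_maxl K 2) k_gt0 _ _ _) _.
  - by rewrite unfold_in size_polyXn; apply: leq_trans k2.
  - by rewrite monic_neq0 ?monicXn.
  - lra.
have H_ge0 n : 0 <= Hilb phi mu k 'X^n by apply: sqrtr_ge0.
have lnN0 : ln (twisted_norm k 'X^0) <= - k%:R :> R by rewrite ln_twisted_norm_1.
have lnN1 : k%:R <= ln (twisted_norm k 'X^1) :> R by rewrite ln_twisted_norm_X.
have /andP[H0_gt0 H0_lt1] := ln_close_below _ _ _ (H_ge0 0%N) lnN0 (close 0%N isT).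
have /andP[H2_gt0 H2_lt1] := ln_close_below _ _ _ (H_ge0 2%N)
  (ln_twisted_norm_X2 _ k2) (close 2%N isT).
have H1_gt1 := ln_close_above _ _ _ lnN1 (close 1%N isT).
have := Hilb_log_convex phi mu k mphi H0_gt0 (lt_trans ltr01 H1_gt1) H2_gt0.
nra.
Qed.

End TwistedNotHilbert.

Theorem proposition4p15 (R : realType) :
  exists N : nat -> {poly R[i]} -> R,
    [/\ graded_herm_norm N,
        (exists phi0 : R * R -> R, smooth_pos_metric phi0 /\ FS_unif_cvg N phi0) &
        forall phi : R * R -> R, cont_psh_metric phi ->
          forall mu : {measure set (R * R) -> \bar R}, is_MA_measure phi mu ->
            ~ equiv_graded_norms N (Hilb phi mu)].
Proof.
exists twisted_norm; split.
- by move=> k _; apply: herm_norm_diag; apply: twisted_weight_gt0.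
- by exists fs_potential; split; [apply: smooth_pos_metric_fs | apply: twisted_FS_cvg].
-
  move=> phi [psi1 [[phi_cont _ _] _ _]] mu _.
  by apply: twisted_not_equiv_Hilb; apply: continuous_measurable_fun_prod.
Qed.
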